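(* (i) The locus of the incenter $X_1$ (triangle center function $h\equiv 1$) over the 3-periodics of $E$ is the ellipse $x^2/a_1^2+y^2/b_1^2=1$ with $a_1=\dfrac{\delta-b^2}{a}$, $b_1=\dfrac{a^2-\delta}{b}$. (ii) The set of all excenters of all 3-periodics of $E$ is the ellipse $x^2/a_e^2+y^2/b_e^2=1$ with $a_e=\dfrac{b^2+\delta}{a}$, $b_e=\dfrac{a^2+\delta}{b}$.
   Context: Fix real numbers $a>b>0$, let $E$ be the ellipse $x^2/a^2+y^2/b^2=1$ and $\delta=\sqrt{a^4-a^2b^2+b^4}$. A 3-periodic is a non-degenerate triangle $P_1P_2P_3$ with all vertices on $E$ such that at each vertex $P_j$ the normal line to $E$ at $P_j$ bisects the interior angle of the triangle at $P_j$. For a triangle let $s_1=|P_2P_3|$, $s_2=|P_3P_1|$, $s_3=|P_1P_2|$. The point with trilinear coordinates $p:q:r$ is the Cartesian point $\dfrac{p s_1P_1+q s_2P_2+r s_3P_3}{p s_1+q s_2+r s_3}$. The incenter has trilinears $1:1:1$; the three excenters have trilinears $-1:1:1$, $1:-1:1$, $1:1:-1$. The locus of a center is the set of its positions over all 3-periodics. *)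

From Stdlib Require Import Reals.
Open Scope R_scope.

Definition pt := (R * R)%type.

Definition dist (P Q : pt) : R :=
  sqrt ((fst P - fst Q) ^ 2 + (snd P - snd Q) ^ 2).

Definition cross (u1 u2 v1 v2 : R) : R := u1 * v2 - u2 * v1.

Definition on_ellipse (a b : R) (P : pt) : Prop :=
  (fst P) ^ 2 / a ^ 2 + (snd P) ^ 2 / b ^ 2 = 1.

Definition delta (a b : R) : R := sqrt (a ^ 4 - a ^ 2 * b ^ 2 + b ^ 4).

Definition nondegenerate (P1 P2 P3 : pt) : Prop :=
  cross (fst P2 - fst P1) (snd P2 - snd P1) (fst P3 - fst P1) (snd P3 - snd P1) <> 0.

(* The interior angle bisector at P (between rays P->Q and P->S) has direction
   (Q-P)/|Q-P| + (S-P)/|S-P|.  The normal line to E at P has direction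
   (x/a^2, y/b^2).  The normal bisects the interior angle at P iff these two
   directions are parallel (both lines pass through P). *)
Definition normal_bisects (a b : R) (P Q S : pt) : Prop :=
  let w1 := (fst Q - fst P) / dist P Q + (fst S - fst P) / dist P S in
  let w2 := (snd Q - snd P) / dist P Q + (snd S - snd P) / dist P S in
  cross (fst P / a ^ 2) (snd P / b ^ 2) w1 w2 = 0.

Definition three_periodic (a b : R) (P1 P2 P3 : pt) : Prop :=
  nondegenerate P1 P2 P3 /\
  on_ellipse a b P1 /\ on_ellipse a b P2 /\ on_ellipse a b P3 /\
  normal_bisects a b P1 P2 P3 /\
  normal_bisects a b P2 P3 P1 /\
  normal_bisects a b P3 P1 P2.

Definition trilinear_point (p q r : R) (P1 P2 P3 : pt) : pt :=
  let s1 := dist P2 P3 in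
  let s2 := dist P3 P1 in
  let s3 := dist P1 P2 in
  let w := p * s1 + q * s2 + r * s3 in
  ((p * s1 * fst P1 + q * s2 * fst P2 + r * s3 * fst P3) / w,
   (p * s1 * snd P1 + q * s2 * snd P2 + r * s3 * snd P3) / w).

Definition incenter (P1 P2 P3 : pt) : pt := trilinear_point 1 1 1 P1 P2 P3.

Definition is_excenter (X : pt) (P1 P2 P3 : pt) : Prop :=
  X = trilinear_point (-1) 1 1 P1 P2 P3 \/
  X = trilinear_point 1 (-1) 1 P1 P2 P3 \/
  X = trilinear_point 1 1 (-1) P1 P2 P3.

(* Parametrise the ellipse by half eccentric angles, P = (a (c^2 - s^2), 2 b s c) with
   s^2 + c^2 = 1.  For a chord PQ let q be its squared length after rescaling the ellipse
   to the unit circle; with D the sine of half the angle difference, q = 4 D^2 and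
   |PQ|^2 = 4 D^2 W for an explicit positive W.  The normal at P is the gradient of the
   ellipse equation, so it bisects the angle at P exactly when q / |PQ| takes the same
   value on both sides through P: a 3-periodic is a triangle whose three sides all satisfy
   m W = n D^2 for one ratio m : n.  With P1 fixed this is a binary quadratic form in the
   other endpoint, whose two roots are P2 and P3, and by Vieta the side P2 P3 satisfies
   it as well iff m : n is a root of a quadratic (Poncelet's porism for triangles), namely
   m : n = 2 delta - a^2 - b^2 : (a^2 - b^2)^2.  As the side lengths are then
   proportional to the D^2, Vieta again makes the incenter and the excenter opposite P1
   rational in P1: the excenter is (-(b^2 + delta) x / a^2, -(a^2 + delta) y / b^2), on
   the outer ellipse, and the incenter is the point of the inner ellipse at a half-angle
   direction cubic in (s, c).  Every point of the ellipse starts a 3-periodic and that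
   cubic map is onto, which gives the reverse inclusions. *)

From Pilot Require Import Defs.
From Stdlib Require Import Reals Lra Psatz Nsatz.
Open Scope R_scope.

(* [nsatz] does not recognise [pow] on [R] and can fail when the context holds
   hypotheses other than equations, so powers are expanded and such hypotheses
   cleared first. *)
Ltac nsatz_pow :=
  repeat match goal with
         | H : ?P |- _ =>
             lazymatch type of P with
             | Prop => lazymatch P with @eq R _ _ => fail | _ => clear H end
             end
         end;
  simpl in *; nsatz.

(** * Real algebra *)

Lemma sqr_pos (x : R) : x <> 0 -> 0 < x ^ 2.
Proof. intros hx. destruct (Rdichotomy _ _ hx); nra. Qed.

Lemma sqr_eq0 (x : R) : x ^ 2 = 0 -> x = 0.
Proof. intros h. destruct (Req_dec x 0) as [|hx]; [easy|]. pose proof (sqr_pos x hx). lra. Qed.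

Lemma sum_sqr2_eq0 (x y : R) : x ^ 2 + y ^ 2 = 0 -> x = 0 /\ y = 0.
Proof. intros h. split; apply sqr_eq0; nra. Qed.

Lemma sum_sqr3_eq0 (x y z : R) : x ^ 2 + y ^ 2 + z ^ 2 = 0 -> x = 0 /\ y = 0 /\ z = 0.
Proof. intros h. split; [|split]; apply sqr_eq0; nra. Qed.

Lemma sqr_inj (x y : R) : 0 <= x -> 0 <= y -> x ^ 2 = y ^ 2 -> x = y.
Proof. intros. nra. Qed.

Lemma div_eq_div (x y u v : R) : y <> 0 -> v <> 0 -> x * v = u * y -> x / y = u / v.
Proof.
  intros hy hv e. apply (Rmult_eq_reg_r (y * v)).
  - field_simplify; auto. lra.
  - now apply Rmult_integral_contrapositive_currified.
Qed.

Lemma cross_neq0_norm_pos (u1 u2 v1 v2 : R) : u1 * v2 - u2 * v1 <> 0 -> 0 < u1 ^ 2 + u2 ^ 2.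
Proof.
  intros h. destruct (Req_dec (u1 ^ 2 + u2 ^ 2) 0) as [z|z].
  - destruct (sum_sqr2_eq0 _ _ z) as [-> ->]. lra.
  - pose proof (pow2_ge_0 u1). pose proof (pow2_ge_0 u2). lra.
Qed.

Lemma cross_eq0_iff_dot_eq0 (n1 n2 g1 g2 h1 h2 : R) :
  g1 * h1 + g2 * h2 = 0 -> g1 * h2 - g2 * h1 <> 0 ->
  (n1 * g2 - n2 * g1 = 0 <-> n1 * h1 + n2 * h2 = 0).
Proof.
  intros hgh hx.
  assert (hh : 0 < h1 ^ 2 + h2 ^ 2).
  { apply (cross_neq0_norm_pos h1 h2 g1 g2). intro z. apply hx. lra. }
  assert (E : (n1 * h1 + n2 * h2) * (g1 * h2 - g2 * h1) + (n1 * g2 - n2 * g1) * (h1 ^ 2 + h2 ^ 2)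
              = (g1 * h1 + g2 * h2) * (n1 * h2 - n2 * h1)) by ring.
  rewrite hgh, Rmult_0_l in E. split; intros h.
  - rewrite h, Rmult_0_l, Rplus_0_r in E. destruct (Rmult_integral _ _ E); [easy|contradiction].
  - rewrite h, Rmult_0_l, Rplus_0_l in E. destruct (Rmult_integral _ _ E); lra.
Qed.

Lemma cross3_eq0_collinear (x1 x2 x3 y1 y2 y3 : R) : x1 ^ 2 + x2 ^ 2 + x3 ^ 2 <> 0 ->
  x2 * y3 - x3 * y2 = 0 -> x3 * y1 - x1 * y3 = 0 -> x1 * y2 - x2 * y1 = 0 ->
  exists k, y1 = k * x1 /\ y2 = k * x2 /\ y3 = k * x3.
Proof.
  intros hx h1 h2 h3.
  assert (e : forall y x, y * (x1 ^ 2 + x2 ^ 2 + x3 ^ 2) = (x1 * y1 + x2 * y2 + x3 * y3) * x ->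
             y = (x1 * y1 + x2 * y2 + x3 * y3) / (x1 ^ 2 + x2 ^ 2 + x3 ^ 2) * x).
  { intros y x hyx. apply (Rmult_eq_reg_r (x1 ^ 2 + x2 ^ 2 + x3 ^ 2)); auto.
    rewrite hyx. field. auto. }
  exists ((x1 * y1 + x2 * y2 + x3 * y3) / (x1 ^ 2 + x2 ^ 2 + x3 ^ 2)).
  split; [|split]; apply e; nsatz_pow.
Qed.

Lemma unit_rescale (y z : R) : 0 < y ^ 2 + z ^ 2 ->
  exists t, 0 < t /\ (t * y) ^ 2 + (t * z) ^ 2 = 1.
Proof.
  intros h. exists (/ sqrt (y ^ 2 + z ^ 2)).
  pose proof (sqrt_lt_R0 _ h) as hs. pose proof (pow2_sqrt _ (Rlt_le _ _ h)) as e.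
  split; [now apply Rinv_0_lt_compat|].
  transitivity ((y ^ 2 + z ^ 2) / sqrt (y ^ 2 + z ^ 2) ^ 2); [field; lra|].
  rewrite e. field. lra.
Qed.

Lemma binary_quadratic_vieta (A B C y2 z2 y3 z3 : R) :
  A * y2 ^ 2 + B * y2 * z2 + C * z2 ^ 2 = 0 -> A * y3 ^ 2 + B * y3 * z3 + C * z3 ^ 2 = 0 ->
  y2 * z3 - y3 * z2 <> 0 -> A ^ 2 + B ^ 2 + C ^ 2 <> 0 ->
  exists k, k <> 0 /\ z2 * z3 = k * A /\ y2 * z3 + y3 * z2 = - k * B /\ y2 * y3 = k * C.
Proof.
  intros h2 h3 hD hABC.
  assert (cross0 : forall u v, (y2 * z3 - y3 * z2) * u = (y2 * z3 - y3 * z2) * v -> u = v)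
    by (intros u v e; exact (Rmult_eq_reg_l _ _ _ e hD)).
  destruct (cross3_eq0_collinear A (- B) C (z2 * z3) (y2 * z3 + y3 * z2) (y2 * y3))
    as [k [e1 [e2 e3]]].
  - intro z. apply hABC. rewrite <- z. ring.
  - apply cross0. nsatz_pow.
  - apply cross0. nsatz_pow.
  - apply cross0. nsatz_pow.
  - exists k. split; [|repeat split; lra].
    intros ->. apply hD, sqr_eq0.
    transitivity ((y2 * z3 + y3 * z2) ^ 2 - 4 * (z2 * z3) * (y2 * y3)); [ring|].
    rewrite e1, e2, e3. ring.
Qed.

Lemma binary_quadratic_unit_roots (A B C : R) : 0 < B ^ 2 - 4 * A * C ->
  exists s2 c2 s3 c3, s2 ^ 2 + c2 ^ 2 = 1 /\ s3 ^ 2 + c3 ^ 2 = 1 /\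
    A * s2 ^ 2 + B * s2 * c2 + C * c2 ^ 2 = 0 /\ A * s3 ^ 2 + B * s3 * c3 + C * c3 ^ 2 = 0 /\
    s2 * c3 - s3 * c2 <> 0.
Proof.
  intros hdisc.
  assert (roots : exists y2 z2 y3 z3, A * y2 ^ 2 + B * y2 * z2 + C * z2 ^ 2 = 0 /\
            A * y3 ^ 2 + B * y3 * z3 + C * z3 ^ 2 = 0 /\ y2 * z3 - y3 * z2 <> 0).
  { destruct (Req_dec A 0) as [-> | hA].
    - exists 1, 0, (- C), B. repeat split; try ring. intro z. assert (B = 0) by lra. subst B. nra.
    - pose proof (pow2_sqrt _ (Rlt_le _ _ hdisc)) as e. pose proof (sqrt_lt_R0 _ hdisc).
      set (r := sqrt (B ^ 2 - 4 * A * C)) in *. clearbody r.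
      exists (- B + r), (2 * A), (- B - r), (2 * A).
      repeat split; try nsatz_pow.
      intro z. assert (z' : 4 * A * r = 0) by (rewrite <- z; ring). nra. }
  destruct roots as [y2 [z2 [y3 [z3 [q2 [q3 hD]]]]]].
  destruct (unit_rescale y2 z2) as [t2 [t2p u2]]; [apply (cross_neq0_norm_pos _ _ y3 z3); lra|].
  destruct (unit_rescale y3 z3) as [t3 [t3p u3]]; [apply (cross_neq0_norm_pos _ _ y2 z2); lra|].
  exists (t2 * y2), (t2 * z2), (t3 * y3), (t3 * z3). repeat split; auto.
  - transitivity (t2 ^ 2 * (A * y2 ^ 2 + B * y2 * z2 + C * z2 ^ 2)); [ring|]. rewrite q2. ring.
  - transitivity (t3 ^ 2 * (A * y3 ^ 2 + B * y3 * z3 + C * z3 ^ 2)); [ring|]. rewrite q3. ring.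
  - replace (t2 * y2 * (t3 * z3) - t3 * y3 * (t2 * z2)) with (t2 * t3 * (y2 * z3 - y3 * z2))
      by ring.
    apply Rmult_integral_contrapositive_currified; [|exact hD]. nra.
Qed.

Lemma monic_cubic_root (q2 q1 q0 : R) : exists x, x ^ 3 + q2 * x ^ 2 + q1 * x + q0 = 0.
Proof.
  set (M := 1 + Rabs q2 + Rabs q1 + Rabs q0).
  assert (hM : 1 <= M) by (unfold M; pose proof (Rabs_pos q2); pose proof (Rabs_pos q1);
                           pose proof (Rabs_pos q0); lra).
  assert (bound : Rabs (q2 * M ^ 2) + Rabs (q1 * M) + Rabs q0 < M ^ 3).
  { rewrite !Rabs_mult, (Rabs_right M), (Rabs_right (M ^ 2)) by nra.
    pose proof (Rabs_pos q1). pose proof (Rabs_pos q0).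
    assert (M <= M ^ 2) by nra.
    assert (Rabs q1 * M <= Rabs q1 * M ^ 2) by nra.
    assert (Rabs q0 <= Rabs q0 * M ^ 2) by nra.
    assert (M ^ 3 = (1 + Rabs q2 + Rabs q1 + Rabs q0) * M ^ 2) by (unfold M; ring).
    nra. }
  pose proof (Rle_abs (q2 * M ^ 2)). pose proof (Rle_abs (- (q2 * M ^ 2))).
  pose proof (Rle_abs (q1 * M)). pose proof (Rle_abs (- (q1 * M))).
  pose proof (Rle_abs q0). pose proof (Rle_abs (- q0)). rewrite !Rabs_Ropp in *.
  destruct (IVT (fun x => x ^ 3 + q2 * x ^ 2 + q1 * x + q0) (- M) M) as [x [_ hx]].
  - reg.
  - lra.
  - cbv beta. replace ((- M) ^ 3) with (- M ^ 3) by ring.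
    replace ((- M) ^ 2) with (M ^ 2) by ring. lra.
  - cbv beta. lra.
  - now exists x.
Qed.

Lemma binary_cubic_unit_root (p3 p2 p1 p0 : R) : p3 <> 0 ->
  exists s c, s ^ 2 + c ^ 2 = 1 /\ p3 * s ^ 3 + p2 * s ^ 2 * c + p1 * s * c ^ 2 + p0 * c ^ 3 = 0.
Proof.
  intros h3. destruct (monic_cubic_root (p2 / p3) (p1 / p3) (p0 / p3)) as [x hx].
  destruct (unit_rescale x 1) as [t [tp u]]; [pose proof (pow2_ge_0 x); lra|].
  exists (t * x), (t * 1). split; [exact u|].
  transitivity (t ^ 3 * p3 * (x ^ 3 + p2 / p3 * x ^ 2 + p1 / p3 * x + p0 / p3)); [field; exact h3|].
  rewrite hx. ring.
Qed.

(** * Points of the ellipse *)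

(* [(s, c)] is the (sine, cosine) of half the eccentric angle, so [ell_pt] is a
   polynomial parametrisation of the ellipse by the unit circle. *)
Definition ell_pt (a b s c : R) : pt := (a * (c ^ 2 - s ^ 2), 2 * b * s * c).

Definition ell_hpt (a b s c : R) : pt :=
  (a * (c ^ 2 - s ^ 2) / (s ^ 2 + c ^ 2), 2 * b * s * c / (s ^ 2 + c ^ 2)).

Definition scaled_dist2 (a b : R) (P Q : pt) : R :=
  ((fst P - fst Q) / a) ^ 2 + ((snd P - snd Q) / b) ^ 2.

Lemma on_ellipse_ell_pt (a b s c : R) : a <> 0 -> b <> 0 -> s ^ 2 + c ^ 2 = 1 ->
  on_ellipse a b (ell_pt a b s c).
Proof.
  intros ha hb u. unfold on_ellipse, ell_pt; cbn [fst snd].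
  transitivity ((s ^ 2 + c ^ 2) ^ 2); [field; auto|]. rewrite u. ring.
Qed.

Lemma on_ellipse_ell_hpt (a b s c : R) : a <> 0 -> b <> 0 -> s ^ 2 + c ^ 2 <> 0 ->
  on_ellipse a b (ell_hpt a b s c).
Proof.
  intros ha hb hsc. unfold on_ellipse, ell_hpt; cbn [fst snd].
  transitivity ((s ^ 2 + c ^ 2) ^ 2 / (s ^ 2 + c ^ 2) ^ 2); [field; auto|].
  field. auto.
Qed.

Lemma ell_hpt_collinear (a b y z s c : R) : y ^ 2 + z ^ 2 <> 0 -> s ^ 2 + c ^ 2 = 1 ->
  y * c - z * s = 0 -> ell_hpt a b y z = ell_pt a b s c.
Proof.
  intros hyz u hpar.
  assert (ey : y = (y * s + z * c) * s) by nsatz_pow.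
  assert (ez : z = (y * s + z * c) * c) by nsatz_pow.
  set (t := y * s + z * c) in *. clearbody t.
  assert (ht : t <> 0) by (intros ->; apply hyz; rewrite ey, ez; ring).
  assert (en : (t * s) ^ 2 + (t * c) ^ 2 = t ^ 2) by (rewrite <- (Rmult_1_r (t ^ 2)), <- u; ring).
  unfold ell_hpt, ell_pt. rewrite ey, ez, en.
  f_equal; field; auto.
Qed.

Lemma ell_pt_of_on_ellipse (a b : R) (P : pt) : 0 < a -> 0 < b -> on_ellipse a b P ->
  exists s c, s ^ 2 + c ^ 2 = 1 /\ P = ell_pt a b s c.
Proof.
  intros ha hb hP. destruct P as [x y]. unfold on_ellipse in hP; cbn [fst snd] in hP.
  set (u := x / a). set (v := y / b).
  assert (huv : u ^ 2 + v ^ 2 = 1) by (unfold u, v; rewrite <- hP; field; lra).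
  assert (hu : - 1 <= u <= 1) by (pose proof (pow2_ge_0 v); nra).
  set (c := sqrt ((1 + u) / 2)). set (s := sqrt ((1 - u) / 2)).
  assert (hc : c ^ 2 = (1 + u) / 2) by (apply pow2_sqrt; lra).
  assert (hs : s ^ 2 = (1 - u) / 2) by (apply pow2_sqrt; lra).
  assert (hsc : (s * c) ^ 2 = (v / 2) ^ 2) by (rewrite Rpow_mult_distr, hs, hc; nra).
  assert (hsc0 : 0 <= s * c) by (apply Rmult_le_pos; apply sqrt_pos).
  assert (ex : x = a * (c ^ 2 - s ^ 2)) by (rewrite hc, hs; unfold u; field; lra).
  destruct (Rle_or_lt 0 v) as [hv | hv].
  - exists s, c. split; [lra|]. unfold ell_pt. f_equal; [exact ex|].
    replace (2 * b * s * c) with (2 * b * (s * c)) by ring.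
    rewrite (sqr_inj (s * c) (v / 2)) by lra. unfold v; field; lra.
  - exists (- s), c. split; [lra|]. unfold ell_pt. f_equal; [lra|].
    replace (2 * b * - s * c) with (- (2 * b * (s * c))) by ring.
    rewrite (sqr_inj (s * c) (- (v / 2))) by (lra || (rewrite hsc; ring)). unfold v; field; lra.
Qed.

Lemma dist_sqr (P Q : pt) : Defs.dist P Q ^ 2 = (fst P - fst Q) ^ 2 + (snd P - snd Q) ^ 2.
Proof.
  unfold Defs.dist. apply pow2_sqrt.
  pose proof (pow2_ge_0 (fst P - fst Q)). pose proof (pow2_ge_0 (snd P - snd Q)). lra.
Qed.

Lemma dist_sym (P Q : pt) : Defs.dist P Q = Defs.dist Q P.
Proof. unfold Defs.dist. f_equal. ring. Qed.

Lemma scaled_dist2_sym (a b : R) (P Q : pt) : scaled_dist2 a b P Q = scaled_dist2 a b Q P.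
Proof.
  unfold scaled_dist2.
  replace (fst Q - fst P) with (- (fst P - fst Q)) by ring.
  replace (snd Q - snd P) with (- (snd P - snd Q)) by ring.
  unfold Rdiv. ring.
Qed.

Lemma normal_dot_on_ellipse (a b : R) (P Q : pt) : a <> 0 -> b <> 0 ->
  on_ellipse a b P -> on_ellipse a b Q ->
  fst P / a ^ 2 * (fst Q - fst P) + snd P / b ^ 2 * (snd Q - snd P) = - scaled_dist2 a b P Q / 2.
Proof.
  intros ha hb hP hQ. unfold on_ellipse, scaled_dist2 in *.
  apply Rminus_diag_uniq.
  transitivity (((fst Q ^ 2 / a ^ 2 + snd Q ^ 2 / b ^ 2) -
                 (fst P ^ 2 / a ^ 2 + snd P ^ 2 / b ^ 2)) / 2); [field; auto|].
  rewrite hP, hQ. field.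
Qed.

Lemma dist_pos_of_cross (P Q : pt) (v1 v2 : R) :
  (fst Q - fst P) * v2 - (snd Q - snd P) * v1 <> 0 -> 0 < Defs.dist P Q.
Proof.
  intros h. unfold Defs.dist. apply sqrt_lt_R0.
  pose proof (cross_neq0_norm_pos _ _ _ _ h). nra.
Qed.

Lemma normal_bisects_iff (a b : R) (P Q S : pt) : a <> 0 -> b <> 0 ->
  on_ellipse a b P -> on_ellipse a b Q -> on_ellipse a b S ->
  cross (fst Q - fst P) (snd Q - snd P) (fst S - fst P) (snd S - snd P) <> 0 ->
  (normal_bisects a b P Q S <->
   scaled_dist2 a b P Q / Defs.dist P Q = scaled_dist2 a b P S / Defs.dist P S).
Proof.
  intros ha hb hP hQ hS hc. unfold cross in hc.
  pose proof (dist_pos_of_cross P Q _ _ hc) as hQpos.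
  pose proof (dist_pos_of_cross P S (fst Q - fst P) (snd Q - snd P) ltac:(lra)) as hSpos.
  assert (eQ : (fst Q - fst P) ^ 2 + (snd Q - snd P) ^ 2 = Defs.dist P Q ^ 2)
    by (rewrite dist_sqr; ring).
  assert (eS : (fst S - fst P) ^ 2 + (snd S - snd P) ^ 2 = Defs.dist P S ^ 2)
    by (rewrite dist_sqr; ring).
  pose proof (normal_dot_on_ellipse a b P Q ha hb hP hQ) as nQ.
  pose proof (normal_dot_on_ellipse a b P S ha hb hP hS) as nS.
  set (dQ := Defs.dist P Q) in *. set (dS := Defs.dist P S) in *.
  unfold normal_bisects, cross; cbv zeta. fold dQ dS.
  (* the bisector direction [e + f] of the unit vectors [e], [f] along the sides is
     orthogonal to [e - f] *)
  rewrite (cross_eq0_iff_dot_eq0 _ _ _ _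
             ((fst Q - fst P) / dQ - (fst S - fst P) / dS) ((snd Q - snd P) / dQ - (snd S - snd P) / dS)).
  - assert (E : fst P / a ^ 2 * ((fst Q - fst P) / dQ - (fst S - fst P) / dS) +
                snd P / b ^ 2 * ((snd Q - snd P) / dQ - (snd S - snd P) / dS) =
                - (scaled_dist2 a b P Q / dQ - scaled_dist2 a b P S / dS) / 2).
    { transitivity ((fst P / a ^ 2 * (fst Q - fst P) + snd P / b ^ 2 * (snd Q - snd P)) / dQ -
                    (fst P / a ^ 2 * (fst S - fst P) + snd P / b ^ 2 * (snd S - snd P)) / dS);
        [field; lra|].
      rewrite nQ, nS. field. lra. }
    rewrite E. lra.
  - transitivity (((fst Q - fst P) ^ 2 + (snd Q - snd P) ^ 2) / dQ ^ 2 -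
                  ((fst S - fst P) ^ 2 + (snd S - snd P) ^ 2) / dS ^ 2); [field; lra|].
    rewrite eQ, eS. field. lra.
  - replace (((fst Q - fst P) / dQ + (fst S - fst P) / dS) * ((snd Q - snd P) / dQ - (snd S - snd P) / dS) -
             ((snd Q - snd P) / dQ + (snd S - snd P) / dS) * ((fst Q - fst P) / dQ - (fst S - fst P) / dS))
      with (-2 * ((fst Q - fst P) * (snd S - snd P) - (snd Q - snd P) * (fst S - fst P)) / (dQ * dS))
      by (field; lra).
    unfold Rdiv. apply Rmult_integral_contrapositive_currified.
    + apply Rmult_integral_contrapositive_currified; lra.
    + apply Rinv_neq_0_compat. nra.
Qed.

Lemma trilinear_point_scale (p q r K e1 e2 e3 : R) (P1 P2 P3 : pt) : K <> 0 ->
  Defs.dist P2 P3 = K * e1 -> Defs.dist P3 P1 = K * e2 -> Defs.dist P1 P2 = K * e3 ->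
  p * e1 + q * e2 + r * e3 <> 0 ->
  trilinear_point p q r P1 P2 P3 =
  ((p * e1 * fst P1 + q * e2 * fst P2 + r * e3 * fst P3) / (p * e1 + q * e2 + r * e3),
   (p * e1 * snd P1 + q * e2 * snd P2 + r * e3 * snd P3) / (p * e1 + q * e2 + r * e3)).
Proof.
  intros hK h1 h2 h3 he. unfold trilinear_point; cbv zeta. rewrite h1, h2, h3.
  assert (p * (K * e1) + q * (K * e2) + r * (K * e3) <> 0).
  { replace (p * (K * e1) + q * (K * e2) + r * (K * e3)) with (K * (p * e1 + q * e2 + r * e3))
      by ring.
    now apply Rmult_integral_contrapositive_currified. }
  f_equal; field; auto.
Qed.

Lemma trilinear_point_rot1 (P1 P2 P3 : pt) :
  trilinear_point 1 (-1) 1 P1 P2 P3 = trilinear_point (-1) 1 1 P2 P3 P1.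
Proof. unfold trilinear_point; cbv zeta. f_equal; f_equal; ring. Qed.

Lemma trilinear_point_rot2 (P1 P2 P3 : pt) :
  trilinear_point 1 1 (-1) P1 P2 P3 = trilinear_point (-1) 1 1 P3 P1 P2.
Proof. unfold trilinear_point; cbv zeta. f_equal; f_equal; ring. Qed.

(** * Chords in half-angle coordinates *)

Definition sin_sub (s1 c1 s2 c2 : R) : R := s1 * c2 - s2 * c1.

Definition chord_weight (a b s1 c1 s2 c2 : R) : R :=
  a ^ 2 * (s1 * c2 + s2 * c1) ^ 2 + b ^ 2 * (c1 * c2 - s1 * s2) ^ 2.

(* For a chord between [ell_pt]s, [scaled_dist2 = 4 sin_sub^2] and
   [dist^2 = 4 sin_sub^2 chord_weight]; so [chord_form m n = 0] says that
   [scaled_dist2 / dist = 2 sqrt (m / n)] along the chord. *)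
Definition chord_form (a b m n s1 c1 s2 c2 : R) : R :=
  m * chord_weight a b s1 c1 s2 c2 - n * sin_sub s1 c1 s2 c2 ^ 2.

Definition chord_coef_ss (a b m n s c : R) : R := m * (a ^ 2 * c ^ 2 + b ^ 2 * s ^ 2) - n * c ^ 2.
Definition chord_coef_sc (a b m n s c : R) : R := 2 * s * c * (m * (a ^ 2 - b ^ 2) + n).
Definition chord_coef_cc (a b m n s c : R) : R := m * (a ^ 2 * s ^ 2 + b ^ 2 * c ^ 2) - n * s ^ 2.

Definition chord_form_sym (a b m n p q r : R) : R :=
  m * (a ^ 2 * q ^ 2 + b ^ 2 * (p - r) ^ 2) - n * (q ^ 2 - 4 * p * r).

Definition closure_poly (a b m n : R) : R :=
  m ^ 2 * (a ^ 2 - b ^ 2) ^ 2 + 2 * (a ^ 2 + b ^ 2) * m * n - 3 * n ^ 2.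

Definition chord_triangle (a b m n s1 c1 s2 c2 s3 c3 : R) : Prop :=
  s1 ^ 2 + c1 ^ 2 = 1 /\ s2 ^ 2 + c2 ^ 2 = 1 /\ s3 ^ 2 + c3 ^ 2 = 1 /\
  chord_form a b m n s1 c1 s2 c2 = 0 /\ chord_form a b m n s2 c2 s3 c3 = 0 /\
  chord_form a b m n s3 c3 s1 c1 = 0.

Definition pair_weight (s c p q r : R) : R :=
  2 * s ^ 2 * p ^ 2 - 2 * s ^ 2 * p * r + s ^ 2 * q ^ 2 - 2 * s * c * p * q - 2 * s * c * q * r
  - 2 * c ^ 2 * p * r + c ^ 2 * q ^ 2 + 2 * c ^ 2 * r ^ 2.

Definition pair_moment_x (a s c p q r : R) : R :=
  a * (2 * s ^ 2 * p ^ 2 + 2 * s ^ 2 * p * r - s ^ 2 * q ^ 2 - 2 * s * c * p * q + 2 * s * c * q * r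
       - 2 * c ^ 2 * p * r + c ^ 2 * q ^ 2 - 2 * c ^ 2 * r ^ 2).

Definition pair_moment_y (b s c p q r : R) : R :=
  2 * b * (s ^ 2 * p * q - 4 * s * c * p * r + c ^ 2 * q * r).

Lemma pair_sums (a b s1 c1 s2 c2 s3 c3 : R) : s2 ^ 2 + c2 ^ 2 = 1 -> s3 ^ 2 + c3 ^ 2 = 1 ->
  let p := c2 * c3 in let q := s2 * c3 + s3 * c2 in let r := s2 * s3 in
  sin_sub s3 c3 s1 c1 ^ 2 + sin_sub s1 c1 s2 c2 ^ 2 = pair_weight s1 c1 p q r /\
  sin_sub s3 c3 s1 c1 ^ 2 * fst (ell_pt a b s2 c2) + sin_sub s1 c1 s2 c2 ^ 2 * fst (ell_pt a b s3 c3)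
    = pair_moment_x a s1 c1 p q r /\
  sin_sub s3 c3 s1 c1 ^ 2 * snd (ell_pt a b s2 c2) + sin_sub s1 c1 s2 c2 ^ 2 * snd (ell_pt a b s3 c3)
    = pair_moment_y b s1 c1 p q r.
Proof.
  intros u2 u3 p q r. unfold p, q, r, pair_weight, pair_moment_x, pair_moment_y, sin_sub, ell_pt.
  cbn [fst snd]. repeat split; nsatz_pow.
Qed.

Definition incenter_dir_s (a b d s c : R) : R :=
  - 2 * (d - b ^ 2) * s ^ 2 * c - (a ^ 2 - d) * c * (s ^ 2 - c ^ 2).
Definition incenter_dir_c (a b d s c : R) : R :=
  (a ^ 2 - d) * s * (s ^ 2 - c ^ 2) - 2 * (d - b ^ 2) * s * c ^ 2.

Lemma incenter_identity (a b d s c : R) : d ^ 2 = a ^ 4 - a ^ 2 * b ^ 2 + b ^ 4 ->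
  let m := 2 * d - a ^ 2 - b ^ 2 in let n := (a ^ 2 - b ^ 2) ^ 2 in
  let A := chord_coef_ss a b m n s c in let B := chord_coef_sc a b m n s c in
  let C := chord_coef_cc a b m n s c in
  let F := incenter_dir_c a b d s c in let G := incenter_dir_s a b d s c in
  a * (fst (ell_pt a b s c) * (B ^ 2 - 4 * A * C) + pair_moment_x a s c A (- B) C) * (G ^ 2 + F ^ 2) =
  (d - b ^ 2) * (F ^ 2 - G ^ 2) * ((s ^ 2 + c ^ 2) * (B ^ 2 - 4 * A * C) + pair_weight s c A (- B) C) /\
  b * (snd (ell_pt a b s c) * (B ^ 2 - 4 * A * C) + pair_moment_y b s c A (- B) C) * (G ^ 2 + F ^ 2) =
  (a ^ 2 - d) * (2 * G * F) * ((s ^ 2 + c ^ 2) * (B ^ 2 - 4 * A * C) + pair_weight s c A (- B) C).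
Proof.
  intros hd m n A B C F G. unfold F, G, A, B, C, m, n, incenter_dir_c, incenter_dir_s, ell_pt,
    pair_moment_x, pair_moment_y, pair_weight, chord_coef_ss, chord_coef_sc, chord_coef_cc.
  cbn [fst snd]. split; nsatz_pow.
Qed.

Lemma excenter_identity (a b d s c : R) : d ^ 2 = a ^ 4 - a ^ 2 * b ^ 2 + b ^ 4 ->
  s ^ 2 + c ^ 2 = 1 ->
  let m := 2 * d - a ^ 2 - b ^ 2 in let n := (a ^ 2 - b ^ 2) ^ 2 in
  let A := chord_coef_ss a b m n s c in let B := chord_coef_sc a b m n s c in
  let C := chord_coef_cc a b m n s c in
  a ^ 2 * (- fst (ell_pt a b s c) * (B ^ 2 - 4 * A * C) + pair_moment_x a s c A (- B) C) =
  - (b ^ 2 + d) * fst (ell_pt a b s c) * (- (B ^ 2 - 4 * A * C) + pair_weight s c A (- B) C) /\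
  b ^ 2 * (- snd (ell_pt a b s c) * (B ^ 2 - 4 * A * C) + pair_moment_y b s c A (- B) C) =
  - (a ^ 2 + d) * snd (ell_pt a b s c) * (- (B ^ 2 - 4 * A * C) + pair_weight s c A (- B) C).
Proof.
  intros hd u m n A B C. unfold A, B, C, m, n, ell_pt,
    pair_moment_x, pair_moment_y, pair_weight, chord_coef_ss, chord_coef_sc, chord_coef_cc.
  cbn [fst snd]. split; nsatz_pow.
Qed.

Section Chords.

Variables a b : R.
Hypothesis hb : 0 < b.
Hypothesis hab : b < a.

Local Notation E := (ell_pt a b).

Lemma ell_pt_dist_sqr (s1 c1 s2 c2 : R) : s1 ^ 2 + c1 ^ 2 = 1 -> s2 ^ 2 + c2 ^ 2 = 1 ->
  Defs.dist (E s1 c1) (E s2 c2) ^ 2 = 4 * sin_sub s1 c1 s2 c2 ^ 2 * chord_weight a b s1 c1 s2 c2.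
Proof.
  intros u1 u2. rewrite dist_sqr. unfold ell_pt, sin_sub, chord_weight; cbn [fst snd]. nsatz_pow.
Qed.

Lemma ell_pt_scaled_dist2 (s1 c1 s2 c2 : R) : s1 ^ 2 + c1 ^ 2 = 1 -> s2 ^ 2 + c2 ^ 2 = 1 ->
  scaled_dist2 a b (E s1 c1) (E s2 c2) = 4 * sin_sub s1 c1 s2 c2 ^ 2.
Proof.
  intros u1 u2. unfold scaled_dist2, ell_pt, sin_sub; cbn [fst snd].
  replace ((a * (c1 ^ 2 - s1 ^ 2) - a * (c2 ^ 2 - s2 ^ 2)) / a)
    with ((c1 ^ 2 - s1 ^ 2) - (c2 ^ 2 - s2 ^ 2)) by (field; lra).
  replace ((2 * b * s1 * c1 - 2 * b * s2 * c2) / b) with (2 * (s1 * c1 - s2 * c2)) by (field; lra).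
  nsatz_pow.
Qed.

Lemma ell_pt_cross (s1 c1 s2 c2 s3 c3 : R) :
  s1 ^ 2 + c1 ^ 2 = 1 -> s2 ^ 2 + c2 ^ 2 = 1 -> s3 ^ 2 + c3 ^ 2 = 1 ->
  cross (fst (E s2 c2) - fst (E s1 c1)) (snd (E s2 c2) - snd (E s1 c1))
        (fst (E s3 c3) - fst (E s1 c1)) (snd (E s3 c3) - snd (E s1 c1))
  = 4 * a * b * sin_sub s1 c1 s2 c2 * sin_sub s2 c2 s3 c3 * sin_sub s3 c3 s1 c1.
Proof. intros u1 u2 u3. unfold cross, ell_pt, sin_sub; cbn [fst snd]. nsatz_pow. Qed.

Lemma chord_weight_ge (s1 c1 s2 c2 : R) : s1 ^ 2 + c1 ^ 2 = 1 -> s2 ^ 2 + c2 ^ 2 = 1 ->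
  b ^ 2 <= chord_weight a b s1 c1 s2 c2.
Proof.
  intros u1 u2. unfold chord_weight.
  assert (e : (s1 * c2 + s2 * c1) ^ 2 + (c1 * c2 - s1 * s2) ^ 2 = 1) by nsatz_pow.
  assert (b ^ 2 <= a ^ 2) by nra.
  pose proof (pow2_ge_0 (s1 * c2 + s2 * c1)). nra.
Qed.

Lemma chord_form_sym_args (m n s1 c1 s2 c2 : R) :
  chord_form a b m n s2 c2 s1 c1 = chord_form a b m n s1 c1 s2 c2.
Proof. unfold chord_form, chord_weight, sin_sub. ring. Qed.

Lemma sin_sub_neq0_of_chord (m n s1 c1 s2 c2 : R) : 0 < m ->
  s1 ^ 2 + c1 ^ 2 = 1 -> s2 ^ 2 + c2 ^ 2 = 1 -> chord_form a b m n s1 c1 s2 c2 = 0 ->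
  sin_sub s1 c1 s2 c2 <> 0.
Proof.
  intros hm u1 u2 h z. unfold chord_form in h. rewrite z in h.
  pose proof (chord_weight_ge _ _ _ _ u1 u2).
  assert (0 < m * chord_weight a b s1 c1 s2 c2) by (apply Rmult_lt_0_compat; nra).
  lra.
Qed.

Lemma chord_form_proportional (m n m' n' s1 c1 s2 c2 : R) : n' * m = m' * n ->
  n' * chord_form a b m n s1 c1 s2 c2 = n * chord_form a b m' n' s1 c1 s2 c2.
Proof. intros e. unfold chord_form. nsatz_pow. Qed.

Lemma chord_form_iff_ratio (r s1 c1 s2 c2 : R) : 0 < r ->
  s1 ^ 2 + c1 ^ 2 = 1 -> s2 ^ 2 + c2 ^ 2 = 1 -> sin_sub s1 c1 s2 c2 <> 0 ->
  (chord_form a b (r ^ 2) 4 s1 c1 s2 c2 = 0 <->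
   scaled_dist2 a b (E s1 c1) (E s2 c2) = r * Defs.dist (E s1 c1) (E s2 c2)).
Proof.
  intros hr u1 u2 hD.
  rewrite ell_pt_scaled_dist2 by auto.
  pose proof (ell_pt_dist_sqr _ _ _ _ u1 u2) as e.
  assert (hd : 0 <= Defs.dist (E s1 c1) (E s2 c2)) by apply sqrt_pos.
  pose proof (sqr_pos _ hD) as hD2.
  set (dd := Defs.dist (E s1 c1) (E s2 c2)) in *. set (D := sin_sub s1 c1 s2 c2) in *.
  unfold chord_form. fold D. set (W := chord_weight a b s1 c1 s2 c2) in *.
  split; intros h.
  - apply sqr_inj; [nra | nra |]. rewrite (Rpow_mult_distr r dd), e.
    replace (r ^ 2 * (4 * D ^ 2 * W)) with (4 * D ^ 2 * (r ^ 2 * W)) by ring.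
    replace (r ^ 2 * W) with (4 * D ^ 2) by lra. ring.
  - apply (Rmult_eq_reg_l (4 * D ^ 2)); [|lra].
    transitivity (r ^ 2 * dd ^ 2 - (4 * D ^ 2) ^ 2); [rewrite e; ring|]. rewrite h. ring.
Qed.

Lemma chord_ratio (m n s1 c1 s2 c2 : R) : 0 < m -> 0 < n ->
  s1 ^ 2 + c1 ^ 2 = 1 -> s2 ^ 2 + c2 ^ 2 = 1 -> chord_form a b m n s1 c1 s2 c2 = 0 ->
  scaled_dist2 a b (E s1 c1) (E s2 c2) = 2 * sqrt (m / n) * Defs.dist (E s1 c1) (E s2 c2).
Proof.
  intros hm hn u1 u2 h.
  assert (hr : 0 < 2 * sqrt (m / n))
    by (apply Rmult_lt_0_compat, sqrt_lt_R0; [lra|]; now apply Rdiv_lt_0_compat).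
  assert (er : (2 * sqrt (m / n)) ^ 2 = 4 * m / n).
  { rewrite Rpow_mult_distr, pow2_sqrt by (apply Rlt_le, Rdiv_lt_0_compat; auto). field. lra. }
  apply chord_form_iff_ratio; auto; [now apply (sin_sub_neq0_of_chord m n)|].
  apply (Rmult_eq_reg_l n); [|lra].
  rewrite Rmult_0_r, (chord_form_proportional _ _ m n), h; [ring|].
  rewrite er. field. lra.
Qed.

Lemma chord_form_quadratic (m n s c y z : R) :
  chord_form a b m n s c y z =
  chord_coef_ss a b m n s c * y ^ 2 + chord_coef_sc a b m n s c * y * z +
  chord_coef_cc a b m n s c * z ^ 2.
Proof.
  unfold chord_form, chord_weight, sin_sub, chord_coef_ss, chord_coef_sc, chord_coef_cc. ring.
Qed.

Lemma chord_coefs_neq0 (m n s c : R) : 0 < m -> s ^ 2 + c ^ 2 = 1 ->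
  chord_coef_ss a b m n s c ^ 2 + chord_coef_sc a b m n s c ^ 2 +
  chord_coef_cc a b m n s c ^ 2 <> 0.
Proof.
  intros hm u h. destruct (sum_sqr3_eq0 _ _ _ h) as [hA [hB hC]].
  unfold chord_coef_ss, chord_coef_sc, chord_coef_cc in *.
  assert (en : n = m * (a ^ 2 + b ^ 2)) by nsatz_pow.
  subst n.
  assert (ec : (c ^ 2 - s ^ 2) * (2 * m * b ^ 2) = 0) by nsatz_pow.
  assert (es : s * c * (4 * m * a ^ 2) = 0) by nsatz_pow.
  assert (0 < 2 * m * b ^ 2) by (apply Rmult_lt_0_compat; nra).
  assert (0 < 4 * m * a ^ 2) by (apply Rmult_lt_0_compat; nra).
  assert (c ^ 2 = s ^ 2) by (destruct (Rmult_integral _ _ ec); lra).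
  assert (s * c = 0) by (destruct (Rmult_integral _ _ es); lra).
  nra.
Qed.

Lemma chord_vieta (m n s1 c1 s2 c2 s3 c3 : R) : 0 < m -> s1 ^ 2 + c1 ^ 2 = 1 ->
  chord_form a b m n s1 c1 s2 c2 = 0 -> chord_form a b m n s1 c1 s3 c3 = 0 ->
  sin_sub s2 c2 s3 c3 <> 0 ->
  exists k, k <> 0 /\ c2 * c3 = k * chord_coef_ss a b m n s1 c1 /\
    s2 * c3 + s3 * c2 = - k * chord_coef_sc a b m n s1 c1 /\
    s2 * s3 = k * chord_coef_cc a b m n s1 c1.
Proof.
  intros hm u1 h2 h3 hD. rewrite chord_form_quadratic in h2, h3.
  exact (binary_quadratic_vieta _ _ _ _ _ _ _ h2 h3 hD (chord_coefs_neq0 m n s1 c1 hm u1)).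
Qed.

Lemma poncelet_closure (m n s1 c1 s2 c2 s3 c3 : R) : 0 < m ->
  s1 ^ 2 + c1 ^ 2 = 1 -> s2 ^ 2 + c2 ^ 2 = 1 -> s3 ^ 2 + c3 ^ 2 = 1 ->
  chord_form a b m n s1 c1 s2 c2 = 0 -> chord_form a b m n s1 c1 s3 c3 = 0 ->
  sin_sub s2 c2 s3 c3 <> 0 ->
  (chord_form a b m n s2 c2 s3 c3 = 0 <-> closure_poly a b m n = 0).
Proof.
  intros hm u1 u2 u3 h2 h3 hD.
  destruct (chord_vieta m n s1 c1 s2 c2 s3 c3 hm u1 h2 h3 hD) as [k [hk [e1 [e2 e3]]]].
  assert (E : chord_form a b m n s2 c2 s3 c3 =
              k ^ 2 * m * chord_weight a b s1 c1 s1 c1 * closure_poly a b m n).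
  { transitivity (chord_form_sym a b m n (c2 * c3) (s2 * c3 + s3 * c2) (s2 * s3));
      [unfold chord_form, chord_form_sym, chord_weight, sin_sub; ring|].
    rewrite e1, e2, e3.
    unfold chord_form_sym, chord_coef_ss, chord_coef_sc, chord_coef_cc, chord_weight, closure_poly.
    ring. }
  pose proof (chord_weight_ge _ _ _ _ u1 u1). pose proof (sqr_pos _ hk).
  assert (0 < b ^ 2) by nra.
  assert (0 < k ^ 2 * m * chord_weight a b s1 c1 s1 c1)
    by (apply Rmult_lt_0_compat; [apply Rmult_lt_0_compat|]; lra).
  rewrite E. split; intros h.
  - destruct (Rmult_integral _ _ h); [lra|easy].
  - rewrite h. ring.
Qed.

Local Notation d := (delta a b).

Lemma delta_sqr : d ^ 2 = a ^ 4 - a ^ 2 * b ^ 2 + b ^ 4.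
Proof.
  unfold delta. apply pow2_sqrt.
  pose proof (pow2_ge_0 (a ^ 2 - b ^ 2 / 2)). pose proof (pow2_ge_0 (b ^ 2)). nra.
Qed.

Lemma delta_bounds : b ^ 2 < d < a ^ 2 /\ a ^ 2 + b ^ 2 < 2 * d.
Proof.
  pose proof delta_sqr as e.
  assert (hd : 0 < d).
  { unfold delta; apply sqrt_lt_R0.
    pose proof (pow2_ge_0 (a ^ 2 - b ^ 2 / 2)). assert (0 < b ^ 4) by (apply pow_lt; lra). nra. }
  assert (hb2 : 0 < b ^ 2) by nra.
  assert (hab2 : 0 < a ^ 2 - b ^ 2) by nra.
  assert (e1 : (d - b ^ 2) * (d + b ^ 2) = a ^ 2 * (a ^ 2 - b ^ 2)) by nsatz_pow.
  assert (e2 : (a ^ 2 - d) * (a ^ 2 + d) = b ^ 2 * (a ^ 2 - b ^ 2)) by nsatz_pow.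
  assert (e3 : (2 * d - a ^ 2 - b ^ 2) * (2 * d + a ^ 2 + b ^ 2) = 3 * (a ^ 2 - b ^ 2) ^ 2)
    by nsatz_pow.
  repeat split; nra.
Qed.

Lemma closure_poly_factor (m n : R) :
  (a ^ 2 - b ^ 2) ^ 2 * closure_poly a b m n =
  ((a ^ 2 - b ^ 2) ^ 2 * m - (2 * d - a ^ 2 - b ^ 2) * n) *
  ((a ^ 2 - b ^ 2) ^ 2 * m + (a ^ 2 + b ^ 2 + 2 * d) * n).
Proof. pose proof delta_sqr. unfold closure_poly. nsatz_pow. Qed.

Lemma closure_poly_delta : closure_poly a b (2 * d - a ^ 2 - b ^ 2) ((a ^ 2 - b ^ 2) ^ 2) = 0.
Proof.
  apply (Rmult_eq_reg_l ((a ^ 2 - b ^ 2) ^ 2)); [|apply pow_nonzero; nra].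
  rewrite closure_poly_factor. ring.
Qed.

Lemma closure_poly_root (m n : R) : 0 < m -> 0 < n -> closure_poly a b m n = 0 ->
  (a ^ 2 - b ^ 2) ^ 2 * m = (2 * d - a ^ 2 - b ^ 2) * n.
Proof.
  intros hm hn h. pose proof (closure_poly_factor m n) as e. rewrite h, Rmult_0_r in e.
  pose proof delta_bounds. pose proof (pow2_ge_0 (a ^ 2 - b ^ 2)).
  assert (0 < (a ^ 2 - b ^ 2) ^ 2 * m + (a ^ 2 + b ^ 2 + 2 * d) * n) by nra.
  destruct (Rmult_integral _ _ (eq_sym e)); lra.
Qed.

(* The ratio singled out by [closure_poly_factor]. *)
Local Notation m0 := (2 * d - a ^ 2 - b ^ 2).
Local Notation n0 := ((a ^ 2 - b ^ 2) ^ 2).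

Lemma m0_n0_pos : 0 < m0 /\ 0 < n0.
Proof. pose proof delta_bounds. split; [lra|]. apply pow_lt. nra. Qed.

Lemma chord_triangle_rot (m n s1 c1 s2 c2 s3 c3 : R) :
  chord_triangle a b m n s1 c1 s2 c2 s3 c3 -> chord_triangle a b m n s2 c2 s3 c3 s1 c1.
Proof. unfold chord_triangle. tauto. Qed.

Lemma chord_triangle_sin_sub (m n s1 c1 s2 c2 s3 c3 : R) : 0 < m ->
  chord_triangle a b m n s1 c1 s2 c2 s3 c3 ->
  sin_sub s1 c1 s2 c2 <> 0 /\ sin_sub s2 c2 s3 c3 <> 0 /\ sin_sub s3 c3 s1 c1 <> 0.
Proof.
  intros hm [u1 [u2 [u3 [h12 [h23 h31]]]]].
  repeat split; eapply sin_sub_neq0_of_chord; eauto.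
Qed.

Lemma chord_triangle_nondegenerate (m n s1 c1 s2 c2 s3 c3 : R) : 0 < m ->
  chord_triangle a b m n s1 c1 s2 c2 s3 c3 -> nondegenerate (E s1 c1) (E s2 c2) (E s3 c3).
Proof.
  intros hm T. destruct (chord_triangle_sin_sub _ _ _ _ _ _ _ _ hm T) as [D12 [D23 D31]].
  destruct T as [u1 [u2 [u3 _]]].
  unfold nondegenerate. rewrite ell_pt_cross by auto.
  repeat apply Rmult_integral_contrapositive_currified; auto; lra.
Qed.

Lemma chord_triangle_normal_bisects (m n s1 c1 s2 c2 s3 c3 : R) : 0 < m -> 0 < n ->
  chord_triangle a b m n s1 c1 s2 c2 s3 c3 -> normal_bisects a b (E s1 c1) (E s2 c2) (E s3 c3).
Proof.
  intros hm hn T. pose proof (chord_triangle_nondegenerate _ _ _ _ _ _ _ _ hm T) as ND.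
  destruct T as [u1 [u2 [u3 [h12 [_ h31]]]]]. rewrite chord_form_sym_args in h31.
  pose proof ND as hc. unfold nondegenerate, cross in hc.
  pose proof (dist_pos_of_cross _ _ _ _ hc) as d12.
  pose proof (dist_pos_of_cross (E s1 c1) (E s3 c3) (fst (E s2 c2) - fst (E s1 c1))
                (snd (E s2 c2) - snd (E s1 c1)) ltac:(lra)) as d13.
  apply normal_bisects_iff; try apply on_ellipse_ell_pt; try lra; try exact ND.
  rewrite (chord_ratio m n s1 c1 s2 c2), (chord_ratio m n s1 c1 s3 c3) by auto.
  field. lra.
Qed.

Lemma three_periodic_of_chord_triangle (m n s1 c1 s2 c2 s3 c3 : R) : 0 < m -> 0 < n ->
  chord_triangle a b m n s1 c1 s2 c2 s3 c3 -> three_periodic a b (E s1 c1) (E s2 c2) (E s3 c3).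
Proof.
  intros hm hn T. pose proof (chord_triangle_rot _ _ _ _ _ _ _ _ T) as T2.
  pose proof (chord_triangle_rot _ _ _ _ _ _ _ _ T2) as T3.
  pose proof T as [u1 [u2 [u3 _]]].
  repeat split; try (apply on_ellipse_ell_pt; auto; lra).
  - exact (chord_triangle_nondegenerate _ _ _ _ _ _ _ _ hm T).
  - exact (chord_triangle_normal_bisects _ _ _ _ _ _ _ _ hm hn T).
  - exact (chord_triangle_normal_bisects _ _ _ _ _ _ _ _ hm hn T2).
  - exact (chord_triangle_normal_bisects _ _ _ _ _ _ _ _ hm hn T3).
Qed.

Lemma chord_triangle_of_ratio (r s1 c1 s2 c2 s3 c3 : R) : 0 < r ->
  s1 ^ 2 + c1 ^ 2 = 1 -> s2 ^ 2 + c2 ^ 2 = 1 -> s3 ^ 2 + c3 ^ 2 = 1 ->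
  sin_sub s1 c1 s2 c2 <> 0 -> sin_sub s2 c2 s3 c3 <> 0 -> sin_sub s3 c3 s1 c1 <> 0 ->
  scaled_dist2 a b (E s1 c1) (E s2 c2) = r * Defs.dist (E s1 c1) (E s2 c2) ->
  scaled_dist2 a b (E s2 c2) (E s3 c3) = r * Defs.dist (E s2 c2) (E s3 c3) ->
  scaled_dist2 a b (E s3 c3) (E s1 c1) = r * Defs.dist (E s3 c3) (E s1 c1) ->
  chord_triangle a b m0 n0 s1 c1 s2 c2 s3 c3.
Proof.
  intros hr u1 u2 u3 D12 D23 D31 r12 r23 r31.
  apply chord_form_iff_ratio in r12, r23, r31; auto.
  assert (hr2 : 0 < r ^ 2) by (apply pow_lt; lra).
  assert (r13 := r31). rewrite chord_form_sym_args in r13.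
  pose proof (proj1 (poncelet_closure _ _ _ _ _ _ _ _ hr2 u1 u2 u3 r12 r13 D23) r23) as hQ.
  pose proof (closure_poly_root (r ^ 2) 4 hr2 ltac:(lra) hQ) as e.
  pose proof m0_n0_pos as [hm0 hn0].
  assert (to_m0 : forall x1 y1 x2 y2, chord_form a b (r ^ 2) 4 x1 y1 x2 y2 = 0 ->
                  chord_form a b m0 n0 x1 y1 x2 y2 = 0).
  { intros x1 y1 x2 y2 h. apply (Rmult_eq_reg_l 4); [|lra].
    rewrite (chord_form_proportional _ _ (r ^ 2) 4), h; [ring|lra]. }
  repeat split; auto.
Qed.

Lemma chord_triangle_of_three_periodic (P1 P2 P3 : pt) : three_periodic a b P1 P2 P3 ->
  exists s1 c1 s2 c2 s3 c3, chord_triangle a b m0 n0 s1 c1 s2 c2 s3 c3 /\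
    P1 = E s1 c1 /\ P2 = E s2 c2 /\ P3 = E s3 c3.
Proof.
  intros [ND [H1 [H2 [H3 [B1 [B2 _]]]]]].
  destruct (ell_pt_of_on_ellipse a b P1 ltac:(lra) hb H1) as [s1 [c1 [u1 ->]]].
  destruct (ell_pt_of_on_ellipse a b P2 ltac:(lra) hb H2) as [s2 [c2 [u2 ->]]].
  destruct (ell_pt_of_on_ellipse a b P3 ltac:(lra) hb H3) as [s3 [c3 [u3 ->]]].
  exists s1, c1, s2, c2, s3, c3. refine (conj _ (conj eq_refl (conj eq_refl eq_refl))).
  assert (ND2 : cross (fst (E s3 c3) - fst (E s2 c2)) (snd (E s3 c3) - snd (E s2 c2))
                      (fst (E s1 c1) - fst (E s2 c2)) (snd (E s1 c1) - snd (E s2 c2)) <> 0).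
  { unfold nondegenerate in ND. rewrite ell_pt_cross in ND |- * by auto. intro z. apply ND. lra. }
  unfold nondegenerate in ND. pose proof ND as ND'. rewrite ell_pt_cross in ND' by auto.
  assert (hD : sin_sub s1 c1 s2 c2 <> 0 /\ sin_sub s2 c2 s3 c3 <> 0 /\ sin_sub s3 c3 s1 c1 <> 0)
    by (repeat split; intro z; apply ND'; rewrite z; ring).
  destruct hD as [D12 [D23 D31]].
  rewrite normal_bisects_iff in B1, B2 by (auto; try apply on_ellipse_ell_pt; lra).
  pose proof (dist_pos_of_cross _ _ _ _ ND) as d12.
  rewrite (dist_sym (E s2 c2) (E s1 c1)), (scaled_dist2_sym a b (E s2 c2) (E s1 c1)) in B2.
  set (r := scaled_dist2 a b (E s1 c1) (E s2 c2) / Defs.dist (E s1 c1) (E s2 c2)) in *.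
  assert (hr : 0 < r).
  { unfold r. rewrite ell_pt_scaled_dist2 by auto. apply Rdiv_lt_0_compat; [|lra].
    pose proof (sqr_pos _ D12). lra. }
  pose proof (dist_pos_of_cross _ _ _ _ ND2) as d23.
  pose proof (dist_pos_of_cross (E s1 c1) (E s3 c3) (fst (E s2 c2) - fst (E s1 c1))
                (snd (E s2 c2) - snd (E s1 c1)) ltac:(unfold cross in ND; lra)) as d13.
  apply (chord_triangle_of_ratio r); auto.
  - unfold r. field. lra.
  - transitivity (scaled_dist2 a b (E s2 c2) (E s3 c3) / Defs.dist (E s2 c2) (E s3 c3) *
                  Defs.dist (E s2 c2) (E s3 c3)); [field; lra|].
    now rewrite B2.
  - rewrite dist_sym, scaled_dist2_sym.
    transitivity (scaled_dist2 a b (E s1 c1) (E s3 c3) / Defs.dist (E s1 c1) (E s3 c3) *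
                  Defs.dist (E s1 c1) (E s3 c3)); [field; lra|].
    now rewrite <- B1.
Qed.

Lemma chord_discriminant (s c : R) : s ^ 2 + c ^ 2 = 1 ->
  chord_coef_sc a b m0 n0 s c ^ 2 - 4 * chord_coef_ss a b m0 n0 s c * chord_coef_cc a b m0 n0 s c =
  4 * m0 * (b ^ 2 * (a ^ 2 - d) ^ 2 + 4 * (a ^ 2 - b ^ 2) ^ 3 * (s * c) ^ 2).
Proof.
  intros u. pose proof delta_sqr.
  unfold chord_coef_ss, chord_coef_sc, chord_coef_cc. nsatz_pow.
Qed.

Lemma chord_triangle_complete (s1 c1 : R) : s1 ^ 2 + c1 ^ 2 = 1 ->
  exists s2 c2 s3 c3, chord_triangle a b m0 n0 s1 c1 s2 c2 s3 c3.
Proof.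
  intros u1. pose proof delta_bounds. pose proof m0_n0_pos as [hm0 hn0].
  assert (hdisc : 0 < chord_coef_sc a b m0 n0 s1 c1 ^ 2 -
                      4 * chord_coef_ss a b m0 n0 s1 c1 * chord_coef_cc a b m0 n0 s1 c1).
  { rewrite chord_discriminant by auto.
    assert (0 < b ^ 2 * (a ^ 2 - d) ^ 2) by (apply Rmult_lt_0_compat; apply pow_lt; lra).
    assert (0 <= (a ^ 2 - b ^ 2) ^ 3 * (s1 * c1) ^ 2)
      by (apply Rmult_le_pos; [apply pow_le; nra|apply pow2_ge_0]).
    nra. }
  destruct (binary_quadratic_unit_roots _ _ _ hdisc) as [s2 [c2 [s3 [c3 [u2 [u3 [h2 [h3 hD]]]]]]]].
  rewrite <- chord_form_quadratic in h2, h3.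
  exists s2, c2, s3, c3. repeat split; auto.
  - apply (poncelet_closure _ _ s1 c1); auto. apply closure_poly_delta.
  - now rewrite chord_form_sym_args.
Qed.

Lemma chord_triangle_trilinear (p q r s1 c1 s2 c2 s3 c3 : R) :
  chord_triangle a b m0 n0 s1 c1 s2 c2 s3 c3 ->
  p * sin_sub s2 c2 s3 c3 ^ 2 + q * sin_sub s3 c3 s1 c1 ^ 2 + r * sin_sub s1 c1 s2 c2 ^ 2 <> 0 ->
  trilinear_point p q r (E s1 c1) (E s2 c2) (E s3 c3) =
  ((p * sin_sub s2 c2 s3 c3 ^ 2 * fst (E s1 c1) + q * sin_sub s3 c3 s1 c1 ^ 2 * fst (E s2 c2) +
    r * sin_sub s1 c1 s2 c2 ^ 2 * fst (E s3 c3)) /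
   (p * sin_sub s2 c2 s3 c3 ^ 2 + q * sin_sub s3 c3 s1 c1 ^ 2 + r * sin_sub s1 c1 s2 c2 ^ 2),
   (p * sin_sub s2 c2 s3 c3 ^ 2 * snd (E s1 c1) + q * sin_sub s3 c3 s1 c1 ^ 2 * snd (E s2 c2) +
    r * sin_sub s1 c1 s2 c2 ^ 2 * snd (E s3 c3)) /
   (p * sin_sub s2 c2 s3 c3 ^ 2 + q * sin_sub s3 c3 s1 c1 ^ 2 + r * sin_sub s1 c1 s2 c2 ^ 2)).
Proof.
  intros [u1 [u2 [u3 [h12 [h23 h31]]]]] hden. pose proof m0_n0_pos as [hm0 hn0].
  set (K := 2 * sqrt (m0 / n0)).
  assert (hK : 0 < K) by (apply Rmult_lt_0_compat, sqrt_lt_R0, Rdiv_lt_0_compat; lra).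
  assert (side : forall x1 y1 x2 y2, x1 ^ 2 + y1 ^ 2 = 1 -> x2 ^ 2 + y2 ^ 2 = 1 ->
            chord_form a b m0 n0 x1 y1 x2 y2 = 0 ->
            Defs.dist (E x1 y1) (E x2 y2) = 4 / K * sin_sub x1 y1 x2 y2 ^ 2).
  { intros x1 y1 x2 y2 v1 v2 h.
    pose proof (chord_ratio m0 n0 x1 y1 x2 y2 hm0 hn0 v1 v2 h) as e. fold K in e.
    rewrite ell_pt_scaled_dist2 in e by auto.
    apply (Rmult_eq_reg_l K); [|lra].
    transitivity (4 * sin_sub x1 y1 x2 y2 ^ 2); [now rewrite e | field; lra]. }
  apply trilinear_point_scale with (K := 4 / K); auto.
  apply Rgt_not_eq, Rdiv_lt_0_compat; lra.
Qed.

Local Notation ca s c := (chord_coef_ss a b m0 n0 s c).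
Local Notation cb s c := (chord_coef_sc a b m0 n0 s c).
Local Notation cc s c := (chord_coef_cc a b m0 n0 s c).
Local Notation disc s c := (cb s c ^ 2 - 4 * ca s c * cc s c).

(* The two other vertices of the triangle through [E s1 c1] are the roots of the
   quadratic form [chord_form _ _ _ _ s1 c1], so their symmetric functions, and hence
   every trilinear average, are rational in [(s1, c1)]. *)
Lemma chord_triangle_pencil (s1 c1 s2 c2 s3 c3 : R) :
  chord_triangle a b m0 n0 s1 c1 s2 c2 s3 c3 ->
  exists k, k <> 0 /\
    sin_sub s2 c2 s3 c3 ^ 2 = k ^ 2 * disc s1 c1 /\
    sin_sub s3 c3 s1 c1 ^ 2 + sin_sub s1 c1 s2 c2 ^ 2 =
      k ^ 2 * pair_weight s1 c1 (ca s1 c1) (- cb s1 c1) (cc s1 c1) /\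
    sin_sub s3 c3 s1 c1 ^ 2 * fst (E s2 c2) + sin_sub s1 c1 s2 c2 ^ 2 * fst (E s3 c3) =
      k ^ 2 * pair_moment_x a s1 c1 (ca s1 c1) (- cb s1 c1) (cc s1 c1) /\
    sin_sub s3 c3 s1 c1 ^ 2 * snd (E s2 c2) + sin_sub s1 c1 s2 c2 ^ 2 * snd (E s3 c3) =
      k ^ 2 * pair_moment_y b s1 c1 (ca s1 c1) (- cb s1 c1) (cc s1 c1).
Proof.
  intros T. pose proof m0_n0_pos as [hm0 hn0].
  destruct (chord_triangle_sin_sub _ _ _ _ _ _ _ _ hm0 T) as [_ [D23 _]].
  destruct T as [u1 [u2 [u3 [h12 [h23 h31]]]]]. rewrite chord_form_sym_args in h31.
  destruct (chord_vieta _ _ _ _ _ _ _ _ hm0 u1 h12 h31 D23) as [k [hk [e1 [e2 e3]]]].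
  destruct (pair_sums a b s1 c1 s2 c2 s3 c3 u2 u3) as [PW [PX PY]]. cbv zeta in PW, PX, PY.
  rewrite e1, e2, e3 in PW, PX, PY.
  exists k. repeat split; auto.
  - transitivity ((s2 * c3 + s3 * c2) ^ 2 - 4 * (c2 * c3) * (s2 * s3)); [unfold sin_sub; ring|].
    rewrite e1, e2, e3. ring.
  - rewrite PW. unfold pair_weight. ring.
  - rewrite PX. unfold pair_moment_x. ring.
  - rewrite PY. unfold pair_moment_y. ring.
Qed.

Lemma incenter_dir_norm_pos (s c : R) : s ^ 2 + c ^ 2 = 1 ->
  0 < incenter_dir_s a b d s c ^ 2 + incenter_dir_c a b d s c ^ 2.
Proof.
  intros u. pose proof delta_bounds.
  assert (e : incenter_dir_s a b d s c ^ 2 + incenter_dir_c a b d s c ^ 2 =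
              (s ^ 2 + c ^ 2) * ((a ^ 2 - d) ^ 2 * (s ^ 2 - c ^ 2) ^ 2 + 4 * (d - b ^ 2) ^ 2 * (s * c) ^ 2))
    by (unfold incenter_dir_s, incenter_dir_c; ring).
  assert (e1 : (s ^ 2 - c ^ 2) ^ 2 + 4 * (s * c) ^ 2 = (s ^ 2 + c ^ 2) ^ 2) by ring.
  rewrite u in e, e1. rewrite Rmult_1_l in e.
  assert (0 < (a ^ 2 - d) ^ 2) by (apply pow_lt; lra).
  assert (0 < (d - b ^ 2) ^ 2) by (apply pow_lt; lra).
  pose proof (pow2_ge_0 (s ^ 2 - c ^ 2)). pose proof (pow2_ge_0 (s * c)).
  rewrite e. destruct (Rle_or_lt ((s * c) ^ 2) (1 / 8)); nra.
Qed.

Lemma excenter_weight_pos (s c : R) : s ^ 2 + c ^ 2 = 1 ->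
  0 < - disc s c + pair_weight s c (ca s c) (- cb s c) (cc s c).
Proof.
  intros u. pose proof delta_bounds. pose proof m0_n0_pos as [hm0 _].
  assert (e : - disc s c + pair_weight s c (ca s c) (- cb s c) (cc s c) =
              2 * (ca s c + cc s c) * chord_form a b m0 n0 s c s c).
  { rewrite chord_form_quadratic. unfold pair_weight. nsatz_pow. }
  assert (eAC : ca s c + cc s c = 2 * (a ^ 2 - d) * (d - b ^ 2)).
  { pose proof delta_sqr. unfold chord_coef_ss, chord_coef_cc. nsatz_pow. }
  assert (eW : chord_form a b m0 n0 s c s c = m0 * chord_weight a b s c s c)
    by (unfold chord_form, sin_sub; ring).
  pose proof (chord_weight_ge s c s c u u).
  rewrite e, eAC, eW.
  apply Rmult_lt_0_compat; [|apply Rmult_lt_0_compat; nra].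
  repeat apply Rmult_lt_0_compat; lra.
Qed.

Lemma chord_triangle_trilinear_pencil (w s1 c1 s2 c2 s3 c3 : R) :
  chord_triangle a b m0 n0 s1 c1 s2 c2 s3 c3 ->
  w * disc s1 c1 + pair_weight s1 c1 (ca s1 c1) (- cb s1 c1) (cc s1 c1) <> 0 ->
  trilinear_point w 1 1 (E s1 c1) (E s2 c2) (E s3 c3) =
  ((w * fst (E s1 c1) * disc s1 c1 + pair_moment_x a s1 c1 (ca s1 c1) (- cb s1 c1) (cc s1 c1)) /
   (w * disc s1 c1 + pair_weight s1 c1 (ca s1 c1) (- cb s1 c1) (cc s1 c1)),
   (w * snd (E s1 c1) * disc s1 c1 + pair_moment_y b s1 c1 (ca s1 c1) (- cb s1 c1) (cc s1 c1)) /
   (w * disc s1 c1 + pair_weight s1 c1 (ca s1 c1) (- cb s1 c1) (cc s1 c1))).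
Proof.
  intros T hN.
  destruct (chord_triangle_pencil _ _ _ _ _ _ T) as [k [hk [eD [eW [eX eY]]]]].
  pose proof (sqr_pos _ hk).
  assert (eN : w * sin_sub s2 c2 s3 c3 ^ 2 + 1 * sin_sub s3 c3 s1 c1 ^ 2 + 1 * sin_sub s1 c1 s2 c2 ^ 2 =
               k ^ 2 * (w * disc s1 c1 + pair_weight s1 c1 (ca s1 c1) (- cb s1 c1) (cc s1 c1))).
  { transitivity (w * sin_sub s2 c2 s3 c3 ^ 2 + (sin_sub s3 c3 s1 c1 ^ 2 + sin_sub s1 c1 s2 c2 ^ 2));
      [ring|].
    rewrite eD, eW. ring. }
  rewrite chord_triangle_trilinear
    by (exact T || (rewrite eN; apply Rmult_integral_contrapositive_currified; lra)).
  set (D23 := sin_sub s2 c2 s3 c3) in *. set (D31 := sin_sub s3 c3 s1 c1) in *.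
  set (D12 := sin_sub s1 c1 s2 c2) in *.
  rewrite eN. f_equal.
  - transitivity ((w * D23 ^ 2 * fst (E s1 c1) + (D31 ^ 2 * fst (E s2 c2) + D12 ^ 2 * fst (E s3 c3))) /
                  (k ^ 2 * (w * disc s1 c1 + pair_weight s1 c1 (ca s1 c1) (- cb s1 c1) (cc s1 c1))));
      [f_equal; ring|].
    rewrite eD, eX. field. auto.
  - transitivity ((w * D23 ^ 2 * snd (E s1 c1) + (D31 ^ 2 * snd (E s2 c2) + D12 ^ 2 * snd (E s3 c3))) /
                  (k ^ 2 * (w * disc s1 c1 + pair_weight s1 c1 (ca s1 c1) (- cb s1 c1) (cc s1 c1))));
      [f_equal; ring|].
    rewrite eD, eY. field. auto.
Qed.

Lemma incenter_chord_triangle (s1 c1 s2 c2 s3 c3 : R) :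
  chord_triangle a b m0 n0 s1 c1 s2 c2 s3 c3 ->
  incenter (E s1 c1) (E s2 c2) (E s3 c3) =
  ell_hpt ((d - b ^ 2) / a) ((a ^ 2 - d) / b)
    (incenter_dir_s a b d s1 c1) (incenter_dir_c a b d s1 c1).
Proof.
  intros T. pose proof m0_n0_pos as [hm0 _]. pose proof T as [u1 _].
  destruct (chord_triangle_sin_sub _ _ _ _ _ _ _ _ hm0 T) as [D12 [D23 D31]].
  assert (hN : 0 < disc s1 c1 + pair_weight s1 c1 (ca s1 c1) (- cb s1 c1) (cc s1 c1)).
  { destruct (chord_triangle_pencil _ _ _ _ _ _ T) as [k [hk [eD [eW _]]]].
    apply (Rmult_lt_reg_l (k ^ 2)); [now apply sqr_pos|].
    rewrite Rmult_0_r, Rmult_plus_distr_l, <- eD, <- eW.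
    pose proof (sqr_pos _ D23). pose proof (pow2_ge_0 (sin_sub s3 c3 s1 c1)).
    pose proof (pow2_ge_0 (sin_sub s1 c1 s2 c2)). lra. }
  unfold incenter. rewrite chord_triangle_trilinear_pencil, !Rmult_1_l by (auto; lra).
  pose proof (incenter_identity a b d s1 c1 delta_sqr) as I. cbv zeta in I.
  rewrite u1, Rmult_1_l in I. destruct I as [Ix Iy].
  pose proof (incenter_dir_norm_pos s1 c1 u1).
  unfold ell_hpt. f_equal; apply div_eq_div; try lra.
  - apply (Rmult_eq_reg_l a); [|lra]. rewrite <- Rmult_assoc, Ix. field. lra.
  - apply (Rmult_eq_reg_l b); [|lra]. rewrite <- Rmult_assoc, Iy. field. lra.
Qed.

Lemma excenter_chord_triangle (s1 c1 s2 c2 s3 c3 : R) :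
  chord_triangle a b m0 n0 s1 c1 s2 c2 s3 c3 ->
  trilinear_point (-1) 1 1 (E s1 c1) (E s2 c2) (E s3 c3) =
  (- ((b ^ 2 + d) / a ^ 2) * fst (E s1 c1), - ((a ^ 2 + d) / b ^ 2) * snd (E s1 c1)).
Proof.
  intros T. pose proof T as [u1 _]. pose proof (excenter_weight_pos s1 c1 u1) as hN.
  rewrite chord_triangle_trilinear_pencil by (auto; lra).
  pose proof (excenter_identity a b d s1 c1 delta_sqr u1) as I. cbv zeta in I.
  destruct I as [Ix Iy].
  f_equal.
  - transitivity (a ^ 2 * (- fst (E s1 c1) * disc s1 c1 +
                   pair_moment_x a s1 c1 (ca s1 c1) (- cb s1 c1) (cc s1 c1)) /
                  (a ^ 2 * (- disc s1 c1 + pair_weight s1 c1 (ca s1 c1) (- cb s1 c1) (cc s1 c1))));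
      [field; split; lra|].
    rewrite Ix. field. split; lra.
  - transitivity (b ^ 2 * (- snd (E s1 c1) * disc s1 c1 +
                   pair_moment_y b s1 c1 (ca s1 c1) (- cb s1 c1) (cc s1 c1)) /
                  (b ^ 2 * (- disc s1 c1 + pair_weight s1 c1 (ca s1 c1) (- cb s1 c1) (cc s1 c1))));
      [field; split; lra|].
    rewrite Iy. field. split; lra.
Qed.

Lemma incenter_dir_surjective (s0 c0 : R) : s0 ^ 2 + c0 ^ 2 = 1 ->
  exists s c, s ^ 2 + c ^ 2 = 1 /\
    incenter_dir_s a b d s c * c0 - incenter_dir_c a b d s c * s0 = 0.
Proof.
  intros u0. pose proof delta_bounds. unfold incenter_dir_s, incenter_dir_c.
  destruct (Req_dec s0 0) as [-> | hs0].
  - exists 1, 0. split; ring.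
  - destruct (binary_cubic_unit_root (- (a ^ 2 - d) * s0) (- (a ^ 2 + d - 2 * b ^ 2) * c0)
                ((a ^ 2 + d - 2 * b ^ 2) * s0) ((a ^ 2 - d) * c0)) as [s [c [u e]]].
    + apply Rmult_integral_contrapositive_currified; lra.
    + exists s, c. split; [exact u|]. rewrite <- e. ring.
Qed.

Lemma incenter_locus (X : pt) :
  (exists P1 P2 P3, three_periodic a b P1 P2 P3 /\ X = incenter P1 P2 P3) <->
  on_ellipse ((d - b ^ 2) / a) ((a ^ 2 - d) / b) X.
Proof.
  pose proof delta_bounds. pose proof m0_n0_pos as [hm0 hn0].
  assert (ha1 : 0 < (d - b ^ 2) / a) by (apply Rdiv_lt_0_compat; lra).
  assert (hb1 : 0 < (a ^ 2 - d) / b) by (apply Rdiv_lt_0_compat; lra).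
  split.
  - intros [P1 [P2 [P3 [TP ->]]]].
    destruct (chord_triangle_of_three_periodic _ _ _ TP)
      as [s1 [c1 [s2 [c2 [s3 [c3 [T [-> [-> ->]]]]]]]]].
    rewrite (incenter_chord_triangle _ _ _ _ _ _ T).
    pose proof T as [u1 _]. pose proof (incenter_dir_norm_pos s1 c1 u1).
    apply on_ellipse_ell_hpt; lra.
  - intros hX. destruct (ell_pt_of_on_ellipse _ _ X ha1 hb1 hX) as [s0 [c0 [u0 ->]]].
    destruct (incenter_dir_surjective s0 c0 u0) as [s1 [c1 [u1 e]]].
    destruct (chord_triangle_complete s1 c1 u1) as [s2 [c2 [s3 [c3 T]]]].
    exists (E s1 c1), (E s2 c2), (E s3 c3). split.
    + exact (three_periodic_of_chord_triangle _ _ _ _ _ _ _ _ hm0 hn0 T).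
    + rewrite (incenter_chord_triangle _ _ _ _ _ _ T).
      symmetry. apply ell_hpt_collinear; auto.
      pose proof (incenter_dir_norm_pos s1 c1 u1). lra.
Qed.

Lemma excenter_locus (X : pt) :
  (exists P1 P2 P3, three_periodic a b P1 P2 P3 /\ is_excenter X P1 P2 P3) <->
  on_ellipse ((b ^ 2 + d) / a) ((a ^ 2 + d) / b) X.
Proof.
  pose proof delta_bounds. pose proof m0_n0_pos as [hm0 hn0].
  assert (scale : forall x y, on_ellipse a b (x, y) <->
            on_ellipse ((b ^ 2 + d) / a) ((a ^ 2 + d) / b)
              (- ((b ^ 2 + d) / a ^ 2) * x, - ((a ^ 2 + d) / b ^ 2) * y)).
  { intros x y. unfold on_ellipse; cbn [fst snd].
    replace ((- ((b ^ 2 + d) / a ^ 2) * x) ^ 2 / ((b ^ 2 + d) / a) ^ 2 +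
             (- ((a ^ 2 + d) / b ^ 2) * y) ^ 2 / ((a ^ 2 + d) / b) ^ 2)
      with (x ^ 2 / a ^ 2 + y ^ 2 / b ^ 2) by (field; repeat split; nra).
    reflexivity. }
  split.
  - intros [P1 [P2 [P3 [TP hX]]]].
    destruct (chord_triangle_of_three_periodic _ _ _ TP)
      as [s1 [c1 [s2 [c2 [s3 [c3 [T [-> [-> ->]]]]]]]]].
    pose proof (chord_triangle_rot _ _ _ _ _ _ _ _ T) as T2.
    pose proof (chord_triangle_rot _ _ _ _ _ _ _ _ T2) as T3.
    pose proof T as [u1 [u2 [u3 _]]].
    destruct hX as [-> | [-> | ->]];
      [ rewrite (excenter_chord_triangle _ _ _ _ _ _ T)
      | rewrite trilinear_point_rot1, (excenter_chord_triangle _ _ _ _ _ _ T2)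
      | rewrite trilinear_point_rot2, (excenter_chord_triangle _ _ _ _ _ _ T3) ];
      apply scale, on_ellipse_ell_pt; auto; lra.
  - intros hX. destruct X as [x y].
    set (P1 := (- (a ^ 2 / (b ^ 2 + d)) * x, - (b ^ 2 / (a ^ 2 + d)) * y)).
    assert (eX : (x, y) = (- ((b ^ 2 + d) / a ^ 2) * fst P1, - ((a ^ 2 + d) / b ^ 2) * snd P1)).
    { unfold P1; cbn [fst snd]. f_equal; field; split; nra. }
    assert (hP1 : on_ellipse a b P1) by (apply (scale (fst P1) (snd P1)); rewrite <- eX; exact hX).
    destruct (ell_pt_of_on_ellipse a b P1 ltac:(lra) hb hP1) as [s1 [c1 [u1 e1]]].
    destruct (chord_triangle_complete s1 c1 u1) as [s2 [c2 [s3 [c3 T]]]].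
    exists (E s1 c1), (E s2 c2), (E s3 c3). split.
    + exact (three_periodic_of_chord_triangle _ _ _ _ _ _ _ _ hm0 hn0 T).
    + left. rewrite (excenter_chord_triangle _ _ _ _ _ _ T), <- e1. exact eX.
Qed.

End Chords.

Theorem theorem1 (a b : R) (hb : 0 < b) (hab : b < a) :
  (forall X : pt,
     (exists P1 P2 P3 : pt, three_periodic a b P1 P2 P3 /\ X = incenter P1 P2 P3)
     <-> on_ellipse ((delta a b - b ^ 2) / a) ((a ^ 2 - delta a b) / b) X) /\
  (forall X : pt,
     (exists P1 P2 P3 : pt, three_periodic a b P1 P2 P3 /\ is_excenter X P1 P2 P3)
     <-> on_ellipse ((b ^ 2 + delta a b) / a) ((a ^ 2 + delta a b) / b) X).
Proof.
  split; intros X; [apply incenter_locus | apply excenter_locus]; assumption.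
Qed.
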